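(* Let $k$ be a perfect field of characteristic $p$, let $M(x)\in M_n(k[x])$, and let $I_1(x,T),\dots,I_n(x,T)\in k[x,T]$ be the invariant factors of $M(x)$ (viewed as a matrix over $k(x)$). Let $\ell$ be a finite extension of $k$, $a\in\ell$, let $M(a)\in M_n(\ell)$ be the evaluation of $M(x)$ at $x=a$, and let $I_{1,a}(T),\dots,I_{n,a}(T)$ be the invariant factors of $M(a)$. Set $G_j(x,T)=I_1(x,T)\cdots I_j(x,T)$ and $G_{j,a}(T)=I_{1,a}(T)\cdots I_{j,a}(T)$. Then for every $a\in\ell$ and every $j\in\{1,\dots,n\}$, the polynomial $G_j(a,T)$ divides $G_{j,a}(T)$ in $\ell[T]$.
   Context: For a square matrix $N$ of size $n$ over a field $K$, its invariant factors are the unique monic polynomials $I_1\mid I_2\mid\cdots\mid I_n$ in $K[T]$ (with the convention that exactly $n$ of them are listed, some possibly equal to $1$) such that $N$ is similar to the block-diagonal matrix whose diagonal blocks are the companion matrices of $I_1,\dots,I_n$. The invariant factors of $M(x)$ have their product equal to the characteristic polynomial and lie in $k[x,T]$. *)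

From HB Require Import structures.
From mathcomp Require Import all_boot all_order all_algebra all_field.
Set Implicit Arguments. Unset Strict Implicit. Unset Printing Implicit Defensive.
Import Order.TTheory GRing.Theory.
Local Open Scope ring_scope.

Definition has_char (K : fieldType) (p : nat) : Prop :=
  if p == 0%N then [pchar K] =i pred0 else p \in [pchar K].

Definition perfect_field (K : fieldType) : Prop :=
  [pchar K] =i pred0 \/
  exists2 p, p \in [pchar K] & forall x : K, exists y : K, y ^+ p = x.

Definition invariant_factors (K : fieldType) (n : nat) (N : 'M[K]_n)
    (I : 'I_n -> {poly K}) : Prop :=
  [/\ forall i, I i \is monic,
      forall i j : 'I_n, (i <= j)%N -> I i %| I j
    & exists e : (\sum_(i < n) (size (I i)).-1)%N = n,
      exists2 P : 'M[K]_n, P \in unitmx &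
        P *m N *m invmx P
        = castmx (e, e) (\mxdiag_(i < n) companionmx (I i : seq K))].

(* G_j = I_1 ... I_j (j = i+1 for i : 'I_n). *)
Definition partial_prod (R : comNzRingType) (n : nat) (I : 'I_n -> R) (j : nat) : R :=
  \prod_(i < n | (i < j)%N) I i.

From HB Require Import structures.
From mathcomp Require Import all_boot all_order all_algebra all_field perm zify.
Set Implicit Arguments. Unset Strict Implicit. Unset Printing Implicit Defensive.
Import GRing.Theory.
Local Open Scope ring_scope.

(* Over a field K, ['X%:M - N] is equivalent over K[X] to the diagonal matrix of
   the invariant factors of N: conjugating N by a constant matrix is such an
   equivalence, ['X%:M - companionmx q] is equivalent to [diag(1, ..., 1, q)]
   through explicit unimodular row and column operations, and the diagonal so
   obtained is a permutation of [diag(I_1, ..., I_n)]. Hence [G_j = I_1 ... I_j]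
   divides every j-minor of ['X%:M - N], and every common divisor of these minors
   divides [G_j].
   The j-minors of ['X%:M - M(x)] lie in k[x][T]; they are divisible by the monic
   [G_j(x, T)] in k(x)[T], hence already in k[x][T]. Evaluating at [x = a] shows
   that [G_j(a, T)] divides every j-minor of ['X%:M - M(a)], hence divides
   [G_{j,a}]. *)

Section TwoSidedMultiples.
Variable R : comUnitRingType.

Definition dvdmx m n m' n' (A : 'M[R]_(m, n)) (B : 'M[R]_(m', n')) :=
  exists X Y, B = X *m A *m Y.

Definition eqvmx m n m' n' (A : 'M[R]_(m, n)) (B : 'M[R]_(m', n')) :=
  dvdmx A B /\ dvdmx B A.

Lemma dvdmx_trans m1 n1 m2 n2 m3 n3 (A : 'M[R]_(m1, n1)) (B : 'M[R]_(m2, n2))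
    (C : 'M[R]_(m3, n3)) :
  dvdmx A B -> dvdmx B C -> dvdmx A C.
Proof.
move=> [X [Y ->]] [X' [Y' ->]]; exists (X' *m X), (Y *m Y').
by rewrite !mulmxA.
Qed.

Lemma eqvmx_sym m n m' n' (A : 'M[R]_(m, n)) (B : 'M[R]_(m', n')) :
  eqvmx A B -> eqvmx B A.
Proof. by case. Qed.

Lemma eqvmx_trans m1 n1 m2 n2 m3 n3 (A : 'M[R]_(m1, n1)) (B : 'M[R]_(m2, n2))
    (C : 'M[R]_(m3, n3)) :
  eqvmx A B -> eqvmx B C -> eqvmx A C.
Proof.
by move=> [AB BA] [BC CB]; split; [apply: dvdmx_trans BC | apply: dvdmx_trans BA].
Qed.

Lemma dvdmx_mxsub m n m' n' (f : 'I_m' -> 'I_m) (g : 'I_n' -> 'I_n) (A : 'M[R]_(m, n)) :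
  dvdmx A (mxsub f g A).
Proof.
exists (rowsub f 1%:M), (colsub g 1%:M).
by rewrite mul_rowsub_mx mul1mx mulmx_colsub mulmx1 mxsubcr.
Qed.

Lemma eqvmx_mxsub m n m' n' (f : 'I_m' -> 'I_m) (g : 'I_n' -> 'I_n)
    (f' : 'I_m -> 'I_m') (g' : 'I_n -> 'I_n') (A : 'M[R]_(m, n)) :
  cancel f' f -> cancel g' g -> eqvmx A (mxsub f g A).
Proof.
move=> ff' gg'; split; first exact: dvdmx_mxsub.
have subK : mxsub f' g' (mxsub f g A) = A.
  by apply/matrixP => i j; rewrite !mxE ff' gg'.
by rewrite -[X in dvdmx _ X]subK; apply: dvdmx_mxsub.
Qed.

Lemma eqvmx_unit n (X Y A : 'M[R]_n) :
  X \in unitmx -> Y \in unitmx -> eqvmx A (X *m A *m Y).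
Proof.
move=> uX uY; split; first by exists X, Y.
by exists (invmx X), (invmx Y); rewrite -mulmxA mulmxK // mulKmx.
Qed.

Lemma mulmx_mxdiag p (p_ : 'I_p -> nat) (A B : forall i, 'M[R]_(p_ i)) :
  \mxdiag_i A i *m \mxdiag_i B i = \mxdiag_i (A i *m B i).
Proof.
rewrite {2}/mxdiag mul_mxdiag_mxblock /mxdiag; apply/eq_mxblock => i j.
by case: eqVneq => [<-|_]; rewrite ?conform_mx_id ?mulmx0.
Qed.

Lemma dvdmx_mxdiag p (p_ : 'I_p -> nat) (A B : forall i, 'M[R]_(p_ i)) :
  (forall i, exists X Y, B i = X *m A i *m Y) -> dvdmx (\mxdiag_i A i) (\mxdiag_i B i).
Proof.
move=> AB; have [X XAB] := fin_all_exists AB; have [Y {}XAB] := fin_all_exists XAB.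
exists (\mxdiag_i X i), (\mxdiag_i Y i).
by rewrite !mulmx_mxdiag; apply: eq_mxdiag.
Qed.

Lemma eqvmx_mxdiag p (p_ : 'I_p -> nat) (A B : forall i, 'M[R]_(p_ i)) :
  (forall i, eqvmx (A i) (B i)) -> eqvmx (\mxdiag_i A i) (\mxdiag_i B i).
Proof. by move=> AB; split; apply: dvdmx_mxdiag => i; case: (AB i). Qed.

End TwoSidedMultiples.

Definition minor (R : comNzRingType) m n j (A : 'M[R]_(m, n))
    (f : 'I_j -> 'I_m) (g : 'I_j -> 'I_n) : R :=
  \det (mxsub f g A).

Lemma det_mulmx_rowsub (R : comNzRingType) j m (Y : 'M[R]_(j, m)) (Z : 'M[R]_(m, j)) :
  \det (Y *m Z) = \sum_(h : {ffun 'I_j -> 'I_m}) (\prod_r Y r (h r)) * \det (rowsub h Z).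
Proof.
transitivity (\sum_(s : 'S_j) \sum_(h : {ffun 'I_j -> 'I_m})
    (-1) ^+ s * \prod_r (Y r (h r) * Z (h r) (s r))).
  apply: eq_bigr => s _; rewrite -big_distrr /=; congr (_ * _).
  rewrite -(bigA_distr_bigA (fun r k => Y r k * Z k (s r))) /=.
  by apply: eq_bigr => r _; rewrite mxE.
rewrite exchange_big; apply: eq_bigr => h _.
rewrite big_distrr; apply: eq_bigr => s _ /=.
rewrite big_split /= mulrCA; congr (_ * (_ * _)).
by apply: eq_bigr => r _; rewrite mxE.
Qed.

Lemma rmorph_minor (R S : comNzRingType) (f : {rmorphism R -> S}) m n j
    (A : 'M[R]_(m, n)) (r : 'I_j -> 'I_m) (c : 'I_j -> 'I_n) :
  f (minor A r c) = minor (map_mx f A) r c.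
Proof. by rewrite /minor -det_map_mx map_mxsub. Qed.

Section MinorDivisors.
Variable K : fieldType.
Implicit Types d : {poly K}.

Definition dvd_minors m n j d (A : 'M[{poly K}]_(m, n)) :=
  forall (f : 'I_j -> 'I_m) (g : 'I_j -> 'I_n), d %| minor A f g.

Lemma dvd_minors_mull m n m' j d (X : 'M_(m', m)) (A : 'M_(m, n)) :
  dvd_minors j d A -> dvd_minors j d (X *m A).
Proof.
move=> dA f g; rewrite /minor mxsub_mul det_mulmx_rowsub.
apply: (big_ind (fun x => d %| x)) => [|x y|h _]; [exact: dvdp0 | exact: dvdp_add |].
by apply: dvdp_mull; rewrite -mxsub_comp; apply: dA.
Qed.

Lemma dvd_minors_tr m n j d (A : 'M_(m, n)) : dvd_minors j d A -> dvd_minors j d A^T.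
Proof. by move=> dA f g; rewrite /minor -det_tr trmx_mxsub trmxK dA. Qed.

Lemma dvd_minors_dvdmx m n m' n' j d (A : 'M_(m, n)) (B : 'M_(m', n')) :
  dvdmx A B -> dvd_minors j d A -> dvd_minors j d B.
Proof.
move=> [X [Y ->]] dA; rewrite -[_ *m Y]trmxK trmx_mul.
exact/dvd_minors_tr/dvd_minors_mull/dvd_minors_tr/dvd_minors_mull.
Qed.

End MinorDivisors.

Section ChainDiagonal.
Variables (K : fieldType) (n : nat) (I : 'I_n -> {poly K}).
Hypothesis I_chain : forall i i' : 'I_n, (i <= i')%N -> I i %| I i'.

(* Remove the largest element m of S: the other j elements of S lie below m,
   so j <= m and I_j divides I_m. *)
Lemma partial_prod_dvd_prod_set j (S : {set 'I_n}) :
  #|S| = j -> partial_prod I j %| \prod_(i in S) I i.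
Proof.
elim: j S => [|j IHj] S cardS.
  by rewrite /partial_prod [X in X %| _]big_pred0 ?dvd1p.
have /set0Pn [s0 s0S] : S != set0 by rewrite -card_gt0 cardS.
have [m mS m_max] := @arg_maxnP _ s0 (mem S) val s0S.
have le_jm : (j <= m)%N.
  rewrite -ltnS -cardS cardE -(size_map val) -(size_iota 0 m.+1).
  apply: uniq_leq_size; first by rewrite (map_inj_uniq val_inj) enum_uniq.
  by move=> x /mapP [i]; rewrite mem_enum => /m_max le_im ->; rewrite mem_iota ltnS.
have lt_jn : (j < n)%N by rewrite -cardS -[X in (_ <= X)%N](card_ord n) max_card.
rewrite (big_setD1 m mS) /partial_prod (bigD1 (Ordinal lt_jn)) //=.
apply: dvdp_mul; first exact: I_chain.
have -> : \prod_(i < n | (i < j.+1)%N && (i != Ordinal lt_jn)) I i = partial_prod I j.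
  by apply: eq_bigl => i; rewrite ltnS ltn_neqAle andbC -val_eqE.
by apply: IHj; move: cardS; rewrite (cardsD1 m S) (mS : m \in S) => -[].
Qed.

Lemma dvd_minors_diag_chain j : dvd_minors j (partial_prod I j) (diag_mx (\row_i I i)).
Proof.
move=> f g; rewrite /minor.
have [f_inj|/injectivePn [r1 [r2 neq_r fr]]] := boolP (injectiveb f); last first.
  by rewrite (determinant_alternate neq_r) ?dvdp0 // => c; rewrite !mxE fr.
have -> : mxsub f g (diag_mx (\row_i I i)) = diag_mx (\row_r I (f r)) *m mxsub f g 1%:M.
  apply/matrixP => r s; rewrite mul_diag_mx !mxE.
  by case: eqP => _; rewrite ?mulr0n ?mulr0 ?mulr1n ?mulr1.
rewrite det_mulmx det_diag dvdp_mulr //.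
have -> : \prod_(r < j) (\row_r I (f r)) 0 r = \prod_(i in f @: [set: 'I_j]) I i.
  rewrite big_imset /=; last by move=> x y _ _; apply: (injectiveP _ f_inj).
  by apply: eq_big => [x|x _]; rewrite ?in_setT ?mxE.
by apply: partial_prod_dvd_prod_set; rewrite card_imset ?cardsT ?card_ord //; apply/injectiveP.
Qed.

End ChainDiagonal.

Lemma minor_diag_lead (R : comNzRingType) n (I : 'I_n -> R) j (le_jn : (j <= n)%N) :
  minor (diag_mx (\row_i I i)) (widen_ord le_jn) (widen_ord le_jn) = partial_prod I j.
Proof.
rewrite /minor (_ : mxsub _ _ _ = diag_mx (\row_r I (widen_ord le_jn r))); last first.
  by apply/matrixP => r s; rewrite !mxE.
rewrite det_diag /partial_prod (big_ord_narrow le_jn).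
by apply: eq_bigr => i _; rewrite mxE.
Qed.

Lemma sum_mulrn_eq (R : pzSemiRingType) n (c : 'I_n) (x : R) (F : 'I_n -> R) :
  \sum_(k < n) x *+ (c == k) * F k = x * F c.
Proof.
rewrite (bigD1 c) //= eqxx mulr1n big1 ?addr0 // => k /negPf.
by rewrite eq_sym => ->; rewrite mulr0n mul0r.
Qed.

Definition companion_smith (R : nzRingType) (p : {poly R}) : 'rV[{poly R}]_(size p).-1 :=
  \row_(s < (size p).-1) if s == (size p).-2 :> nat then p else 1.

Section CompanionSmith.
Variables (R : idomainType) (d : nat) (p : {poly R}).
Hypotheses (p_monic : p \is monic) (size_p : size p = d.+2).

(* [companionmx p], with its size [(size p).-1] written [d.+1]. *)
Let C : 'M[R]_d.+1 := \matrix_(i, j) if i == d :> nat then - p`_j else (i.+1 == j :> nat)%:R.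

(* [q s = p %/ 'X^s]. *)
Let q (s : nat) : {poly R} :=
  \sum_(i < d.+2) if (s <= i)%N then (p`_i)%:P * 'X^(i - s) else 0.

(* The column operations [V] turn [char_poly_mx C] into [B], whose last row is
   [q 0, ..., q d] and whose other rows are [- e_(r+1)]; the row operations [U]
   then clear [q 1, ..., q d], and a cyclic shift of the columns leaves
   [diag(1, ..., 1, p)]. *)
Let V : 'M[{poly R}]_d.+1 := \matrix_(k, s) if (s <= k)%N then 'X^(k - s) else 0.

Let B : 'M[{poly R}]_d.+1 :=
  \matrix_(r, s) if r == d :> nat then q s else - (r.+1 == s :> nat)%:R.

Let U : 'M[{poly R}]_d.+1 :=
  \matrix_(r, s) if r == d :> nat then (if s == d :> nat then 1 else q s.+1)
                 else - (r == s)%:R.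

Let q0 : q 0 = p.
Proof.
rewrite /q -[RHS]coefK poly_def size_p; apply: eq_bigr => i _.
by rewrite subn0 mul_polyC.
Qed.

Let q_last s : (s <= d)%N ->
  q s = \sum_(i < d.+1) (if (s <= i)%N then (p`_i)%:P * 'X^(i - s) else 0) + 'X^(d.+1 - s).
Proof.
have lead_p : p`_d.+1 = 1 by move/monicP: p_monic; rewrite lead_coefE size_p.
by move=> le_sd; rewrite /q big_ord_recr /= ifT ?(leq_trans le_sd) // lead_p mul1r.
Qed.

Let companion_column_reduction : char_poly_mx C *m V = B.
Proof.
apply/matrixP => r s; rewrite !mxE; under eq_bigr do rewrite !mxE.
have [r_d|r_d] := eqVneq (r : nat) d.
  have -> : r = ord_max by apply: val_inj.
  under eq_bigr do rewrite polyCN opprK mulrDl.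
  have le_sd : (s <= d)%N by rewrite -ltnS.
  rewrite big_split /= sum_mulrn_eq q_last // ifT // addrC -exprS -subSn //.
  by congr (_ + _); apply: eq_bigr => i _; case: ifP; rewrite ?mulr0.
have lt_rd : (r.+1 < d.+1)%N by rewrite ltnS ltn_neqAle r_d -ltnS ltn_ord.
under eq_bigr => k _ do
  rewrite polyC_natr (_ : (r.+1 == k :> nat) = (Ordinal lt_rd == k)) // mulrBl.
rewrite sumrB !sum_mulrn_eq /= mul1r.
case: (ltngtP s r) => [lt_sr|lt_rs|->].
- have le_sr := ltnW lt_sr.
  by rewrite ifT ?leqW // -exprS -subSn // subrr gtn_eqF ?oppr0.
- rewrite mulr0 sub0r; case: leqP => [le_sr1|lt_r1s]; last by rewrite ltn_eqF ?oppr0.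
  have s_r1 : (s : nat) = r.+1 by apply/eqP; rewrite eqn_leq le_sr1 lt_rs.
  by rewrite s_r1 subnn eqxx.
- by rewrite leqnSn subnn subSnn expr1 mulr1 subrr gtn_eqF ?oppr0.
Qed.

Let companion_row_reduction :
  U *m B = \matrix_(r, t) if r == d :> nat then (t == 0 :> nat)%:R * p
                          else (r.+1 == t :> nat)%:R.
Proof.
apply/matrixP => r t; rewrite !mxE; under eq_bigr do rewrite !mxE.
have [r_d|r_d] := eqVneq (r : nat) d; last first.
  under eq_bigr do rewrite mulNr.
  by rewrite sumrN sum_mulrn_eq /= ifN // mul1r opprK.
rewrite big_ord_recr /= !eqxx mul1r.
under eq_bigr => s _ do rewrite (ltn_eqF (ltn_ord s)) mulrN.
case: t => [[|t] lt_td] /=.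
  by rewrite big1 ?add0r ?mul1r ?q0 // => s _; rewrite mulr0 oppr0.
have lt_td' : (t < d)%N by [].
have eq_t (s : 'I_d) : (s.+1 == t.+1) = (Ordinal lt_td' == s) by rewrite eqSS eq_sym.
under eq_bigr => s _ do rewrite eq_t mulrC.
by rewrite sumrN sum_mulrn_eq mul0r mul1r addNr.
Qed.

Let companion_column_shift :
  mxsub id (@ordS _) (\matrix_(r, t) if r == d :> nat then (t == 0 :> nat)%:R * p
                               else (r.+1 == t :> nat)%:R)
  = diag_mx (\row_(s < d.+1) if s == d :> nat then p else 1).
Proof.
apply/matrixP => r t; rewrite !mxE /= -(inj_eq val_inj) /=.
have [lt_td|] := ltnP t d.
  rewrite modn_small // eqSS.
  by have [r_d|] := eqVneq (r : nat) d; rewrite ?r_d ?(gtn_eqF lt_td) ?mul0r ?mulr1.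
move=> le_dt; have -> : t = ord_max.
  by apply/val_inj/eqP; rewrite /= eqn_leq le_dt -ltnS ltn_ord.
rewrite /= modnn eqxx mulr1n.
by case: eqP; rewrite ?mul1r.
Qed.

Let unitmx_V : V \in unitmx.
Proof.
rewrite unitmxE det_trig; last by apply/is_trig_mxP => i j lt_ij; rewrite mxE leqNgt lt_ij.
by rewrite big1 ?unitr1 // => i _; rewrite mxE leqnn subnn expr0.
Qed.

Let unitmx_U : U \in unitmx.
Proof.
rewrite unitmxE det_trig; last first.
  apply/is_trig_mxP => i j lt_ij; have lt_id : (i < d)%N := leq_trans lt_ij (ltn_ord j).
  by rewrite mxE (ltn_eqF lt_id) -val_eqE /= (ltn_eqF lt_ij) oppr0.
apply: unitr_prod => i _; rewrite mxE eqxx.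
by case: ifP => [->|_]; rewrite ?mulr1n ?unitrN unitr1.
Qed.

Lemma eqvmx_companion_smith_succ :
  eqvmx (char_poly_mx C) (diag_mx (\row_(s < d.+1) if s == d :> nat then p else 1)).
Proof.
apply: (eqvmx_trans (eqvmx_unit (char_poly_mx C) unitmx_U unitmx_V)).
rewrite -mulmxA companion_column_reduction companion_row_reduction -companion_column_shift.
exact: (eqvmx_mxsub _ (fun=> erefl) (@ord_predK _)).
Qed.

End CompanionSmith.

Lemma eqvmx_companion_smith (R : idomainType) (p : {poly R}) :
  p \is monic -> eqvmx (char_poly_mx (companionmx p)) (diag_mx (companion_smith p)).
Proof.
move=> p_monic; rewrite /companionmx /companion_smith.
have : size p = (size p).-1.+1 by rewrite prednK // size_poly_gt0 monic_neq0.
move: (size p).-1 => [|d] size_p.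
  by split; exists 0, 0; apply/matrixP => -[].
exact: eqvmx_companion_smith_succ.
Qed.

Lemma eqvmx_diag_perm_eq (R : comUnitRingType) m n (u : 'rV[R]_m) (v : 'rV[R]_n) :
  perm_eq [seq u 0 i | i : 'I_m] [seq v 0 i | i : 'I_n] ->
  eqvmx (diag_mx u) (diag_mx v).
Proof.
move=> uv; have := perm_size uv; rewrite !size_map -!enumT -!cardT !card_ord => m_n.
subst n; have /tuple_permP [s us] : perm_eq [tuple u 0 i | i < m] [tuple v 0 i | i < m].
  exact: uv.
have u_v i : u 0 i = v 0 (s i).
  by have := congr1 (fun t => tnth t i) (val_inj us); rewrite !tnth_mktuple.
have -> : diag_mx u = mxsub s s (diag_mx v).
  by apply/matrixP => i j; rewrite !mxE u_v (inj_eq perm_inj).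
exact/eqvmx_sym/(eqvmx_mxsub _ (permKV s) (permKV s)).
Qed.

Lemma count_map_ord (T : Type) N (a : pred T) (f : 'I_N -> T) :
  count a [seq f k | k : 'I_N] = (\sum_(k < N) a (f k))%N.
Proof. by rewrite -sumn_count sumnE !big_map. Qed.

Lemma count_mxrow (T : Type) n (q_ : 'I_n -> nat) (B : forall i, 'rV[T]_(q_ i))
    (a : pred T) :
  count a [seq (\mxrow_i B i) ord0 k | k : 'I_(\sum_i q_ i)]
  = (\sum_i count a [seq B i ord0 k | k : 'I_(q_ i)])%N.
Proof.
rewrite count_map_ord; under [RHS]eq_bigr do rewrite count_map_ord.
rewrite sig_big_dep /= (reindex (@tagnat.sig _ q_)) /=; last exact/onW_bij/tagnat.sig_bij.
by apply: eq_bigr => k _; rewrite !mxE.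
Qed.

Lemma count_companion_smith (R : nzRingType) (p : {poly R}) (a : pred {poly R}) :
  p \is monic ->
  (count a [seq companion_smith p ord0 k | k : 'I_(size p).-1] + a 1%R
   = a p + (size p).-1 * a 1%R)%N.
Proof.
move=> p_monic; rewrite count_map_ord /companion_smith.
have : size p = (size p).-1.+1 by rewrite prednK // size_poly_gt0 monic_neq0.
move: (size p).-1 => [|d] size_p.
  have p0 : p`_0 = 1 by move/monicP: p_monic; rewrite lead_coefE size_p.
  by rewrite big_ord0 [p]size1_polyC ?size_p // p0 polyC1 add0n mul0n addn0.
rewrite big_ord_recr /=; under eq_bigr => k _ do rewrite mxE (ltn_eqF (ltn_ord k)).
rewrite mxE eqxx sum_nat_const card_ord; lia.
Qed.

Lemma perm_eq_mxrow_companion_smith (R : nzRingType) n (I : 'I_n -> {poly R}) :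
  (forall i, I i \is monic) -> (\sum_i (size (I i)).-1)%N = n ->
  perm_eq [seq (\mxrow_i companion_smith (I i)) ord0 k | k : 'I_(\sum_i (size (I i)).-1)]
          [seq I i | i : 'I_n].
Proof.
move=> I_monic sum_n; apply/seq.permP => a; rewrite count_mxrow count_map_ord.
apply/eqP; rewrite -(eqn_add2r (\sum_(i < n) a 1%R)) -big_split /=.
under eq_bigr => i _ do rewrite (count_companion_smith _ (I_monic i)).
by rewrite big_split /= -big_distrl /= sum_n sum_nat_const card_ord.
Qed.

Lemma map_mxdiag (aR rR : nmodType) (f : {additive aR -> rR}) p (p_ : 'I_p -> nat)
    (B : forall i, 'M[aR]_(p_ i)) :
  map_mx f (\mxdiag_i B i) = \mxdiag_i (map_mx f (B i)).
Proof.
apply/matrixP => s t; rewrite !mxE; case: eqP => e; last by rewrite !mxE raddf0.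
by rewrite -[in RHS](map_mx0 f) -map_conform_mx mxE.
Qed.

Section CharPolyMx.
Variable K : fieldType.

Lemma char_poly_mx_mxdiag p (p_ : 'I_p -> nat) (B : forall i, 'M[K]_(p_ i)) :
  char_poly_mx (\mxdiag_i B i) = \mxdiag_i (char_poly_mx (B i)).
Proof.
by rewrite /char_poly_mx map_mxdiag -[X in X - _](mxdiagZ (p_ := p_)) -mxdiagB.
Qed.

Lemma char_poly_mx_castmx m n (e : m = n) (A : 'M[K]_m) :
  char_poly_mx (castmx (e, e) A) = castmx (e, e) (char_poly_mx A).
Proof.
by apply/matrixP => i j; rewrite !(castmxE, mxE) (inj_eq (@cast_ord_inj _ _ _)).
Qed.

Lemma char_poly_mx_conj n (P A : 'M[K]_n) : P \in unitmx ->
  char_poly_mx (P *m A *m invmx P)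
  = map_mx polyC P *m char_poly_mx A *m invmx (map_mx polyC P).
Proof.
move=> P_unit; have P'_unit : map_mx polyC P \in unitmx by rewrite map_unitmx.
rewrite /char_poly_mx !map_mxM map_invmx mulmxBr mulmxBl; congr (_ - _).
by rewrite scalar_mxC mulmxK.
Qed.

Lemma eqvmx_char_poly_mx_invariant_factors n (N : 'M[K]_n) (I : 'I_n -> {poly K}) :
  invariant_factors N I -> eqvmx (char_poly_mx N) (diag_mx (\row_i I i)).
Proof.
case=> I_monic _ [e [P P_unit PNP]].
set D := \mxdiag_i companionmx (I i : seq K).
have N_D : eqvmx (char_poly_mx N) (char_poly_mx (castmx (e, e) D)).
  rewrite -PNP char_poly_mx_conj //.
  by apply: eqvmx_unit; rewrite ?unitmx_inv map_unitmx.
have D_cast : eqvmx (char_poly_mx D) (char_poly_mx (castmx (e, e) D)).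
  rewrite char_poly_mx_castmx castmxEsub.
  exact: (eqvmx_mxsub _ (cast_ordK _) (cast_ordK _)).
apply: (eqvmx_trans N_D); apply: (eqvmx_trans (eqvmx_sym D_cast)).
rewrite char_poly_mx_mxdiag.
apply: (eqvmx_trans (eqvmx_mxdiag (fun i => eqvmx_companion_smith (I_monic i)))).
rewrite -diag_mxrow; apply: eqvmx_diag_perm_eq.
under [X in perm_eq _ X]eq_map do rewrite mxE.
exact: perm_eq_mxrow_companion_smith.
Qed.

End CharPolyMx.

Section InvariantFactorMinors.
Variables (K : fieldType) (n : nat) (N : 'M[K]_n) (I : 'I_n -> {poly K}).
Hypothesis NI : invariant_factors N I.

Lemma invariant_factors_dvd_minors j :
  dvd_minors j (partial_prod I j) (char_poly_mx N).
Proof.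
have [_ diag_N] := eqvmx_char_poly_mx_invariant_factors NI.
by apply: dvd_minors_dvdmx diag_N _; apply: dvd_minors_diag_chain; case: NI.
Qed.

Lemma dvd_minors_invariant_factors j d : (j <= n)%N ->
  dvd_minors j d (char_poly_mx N) -> d %| partial_prod I j.
Proof.
move=> le_jn /(dvd_minors_dvdmx (proj1 (eqvmx_char_poly_mx_invariant_factors NI))).
by rewrite -(minor_diag_lead I le_jn); apply.
Qed.

End InvariantFactorMinors.

Lemma monic_dvdp_map_inj (R : comNzRingType) (S : fieldType) (f : {rmorphism R -> S})
    (d p : {poly R}) :
  injective f -> d \is monic -> map_poly f d %| map_poly f p -> exists q, p = q * d.
Proof.
move=> f_inj d_monic fd_fp; exists (Pdiv.Ring.rdivp p d).
have p_eq := Pdiv.RingMonic.rdivp_eq d_monic p; set r := Pdiv.Ring.rmodp p d in p_eq.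
suff r0 : r = 0 by rewrite {1}p_eq r0 addr0.
apply: (map_inj_poly f_inj (rmorph0 f)); rewrite rmorph0; apply/eqP/contraT => fr_neq0.
have r_eq : r = p - Pdiv.Ring.rdivp p d * d by rewrite {1}p_eq addrC addKr.
have fd_fr : map_poly f d %| map_poly f r.
  by rewrite r_eq rmorphB rmorphM dvdp_sub ?dvdp_mull.
have := dvdp_leq fr_neq0 fd_fr; rewrite !size_map_inj_poly ?rmorph0 // leqNgt.
by rewrite Pdiv.Ring.ltn_rmodpN0 ?monic_neq0.
Qed.

Unset Implicit Arguments.

Theorem lemma2p1 (k : fieldType) (p : nat) (hchar : has_char k p)
    (hperf : perfect_field k) (n : nat) (M : 'M[{poly k}]_n)
    (I : 'I_n -> {poly {poly k}})
    (hI : invariant_factors (map_mx (@tofrac _) M)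
            (fun i => map_poly (@tofrac _) (I i)))
    (l : fieldExtType k) (a : l) (Ia : 'I_n -> {poly l})
    (hIa : invariant_factors
             (map_mx (fun q : {poly k} => (map_poly (in_alg l) q).[a]) M) Ia)
    (j : nat) (hj1 : (1 <= j)%N) (hjn : (j <= n)%N) :
  map_poly (fun q : {poly k} => (map_poly (in_alg l) q).[a]) (partial_prod I j)
    %| partial_prod Ia j.
Proof.
pose eval_a := horner_eval a \o map_poly (in_alg l).
change (map_poly eval_a (partial_prod I j) %| partial_prod Ia j).
have tofrac_inj : injective (@tofrac {poly k}) by move=> x y /eqP; rewrite tofrac_eq => /eqP.
have I_monic i : I i \is monic.
  case: hI => /(_ i); rewrite !monicE lead_coef_map_inj ?rmorph0 // => /eqP.
  by rewrite -(rmorph1 (@tofrac _)) => /tofrac_inj ->.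
apply: (dvd_minors_invariant_factors hIa hjn) => r c.
have [q minor_eq] : exists q, minor (char_poly_mx M) r c = q * partial_prod I j.
  apply: (monic_dvdp_map_inj tofrac_inj); first exact: monic_prod.
  rewrite (rmorph_minor (map_poly (@tofrac _))) map_char_poly_mx rmorph_prod.
  exact: invariant_factors_dvd_minors hI j r c.
have := congr1 (map_poly eval_a) minor_eq.
by rewrite rmorph_minor map_char_poly_mx rmorphM => ->; apply: dvdp_mull.
Qed.
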